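(* Let $\mathcal M$ be a small symmetric monoidal category. Then there is an isomorphism of short exact sequences of commutative monoids $$\begin{array}{ccccc} K(\mathrm{Pic}(\mathcal M)) & \xrightarrow{K(\iota_{\mathcal M})} & K(\mathcal M) & \xrightarrow{K(\pi_{\mathcal M})} & K(P(\mathcal M))\\ \downarrow\cong && \| && \downarrow\cong\\ U(K\mathcal M) & \longrightarrow & K(\mathcal M) & \longrightarrow & K(\mathcal M)/U(K\mathcal M)\end{array}$$ (commutative diagram with vertical isomorphisms and middle map the identity), where the bottom row consists of the inclusion and the quotient map. Moreover, writing $\mathrm{Pic}[\mathcal M]=K(\mathrm{Pic}(\mathcal M))$ and $\mathrm{Pure}[\mathcal M]=K(P(\mathcal M))$, the short exact sequence $\mathrm{Pic}[\mathcal M]\to K(\mathcal M)\to\mathrm{Pure}[\mathcal M]$ is a homotopy invariant of $\mathcal M$: any symmetric monoidal equivalence $\mathcal M\simeq\mathcal N$ induces an isomorphism between the corresponding exact sequences of $\mathcal M$ and $\mathcal N$.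
   Context: For a small symmetric monoidal category $\mathcal M$, $K(\mathcal M)$ is the commutative monoid of isomorphism classes $\langle X\rangle$ of objects of $\mathcal M$ with $\langle X\rangle\langle Y\rangle=\langle X\otimes Y\rangle$ and unit $\langle I\rangle$; $K$ is a functor on symmetric (strong) monoidal functors. An object $A$ is weakly invertible if $A\otimes B\cong B\otimes A\cong I$ for some $B$; $\mathrm{Pic}(\mathcal M)$ is the subcategory of weakly invertible objects and isomorphisms, and $\iota_{\mathcal M}$ its inclusion. $P(\mathcal M)$ is the symmetric monoidal category with the same objects as $\mathcal M$, morphisms $X\to Y$ the classes $[A,f]$ of pairs with $A$ weakly invertible and $f\colon X\to Y\otimes A$, where $(A,f)\sim(A',f')$ iff there is an isomorphism $\alpha\colon A\to A'$ with $(Y\otimes\alpha)f=f'$; composition $[B,g]\circ[A,f]=[B\otimes A,\ a_{Z,B,A}(g\otimes A)f]$, identities $[I,r_X^{-1}]$, tensor on objects as in $\mathcal M$, tensor of $[A,f]$ and $[A',f']$ equal to $[A\otimes A',g]$ with $g$ being $f\otimes f'$ followed by the canonical reassociation using the symmetry $b_{A,Y'}$ into $(Y\otimes Y')\otimes(A\otimes A')$, and structure isomorphisms the images under $\pi_{\mathcal M}$; $\pi_{\mathcal M}\colon\mathcal M\to P(\mathcal M)$ is identity on objects and $f\colon X\to Y$ goes to $[I,r_Y^{-1}f]$. For a commutative monoid $M$, $U(M)$ is the group of invertible elements, and $M/U(M)$ is the quotient of $M$ by the congruence $x\sim y\iff x=uy$ for some $u\in U(M)$; the sequence $U(M)\hookrightarrow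 M\to M/U(M)$ is the exact sequence of $M$ in the torsion theory on commutative monoids whose torsion objects are abelian groups and torsion-free objects are monoids whose only invertible element is the unit. *)

From Stdlib Require Import ClassicalEpsilon FunctionalExtensionality
  PropExtensionality ProofIrrelevance.

Set Implicit Arguments.
Unset Strict Implicit.

Record SMC := {
  Ob : Type;
  Hom : Ob -> Ob -> Type;
  idm : forall X, Hom X X;
  comp : forall X Y Z, Hom Y Z -> Hom X Y -> Hom X Z;
  comp_assoc : forall X Y Z W (h : Hom Z W) (g : Hom Y Z) (f : Hom X Y),
      comp h (comp g f) = comp (comp h g) f;
  comp_idl : forall X Y (f : Hom X Y), comp (idm Y) f = f;
  comp_idr : forall X Y (f : Hom X Y), comp f (idm X) = f;
  tens : Ob -> Ob -> Ob;
  tensm : forall X X' Y Y', Hom X X' -> Hom Y Y' -> Hom (tens X Y) (tens X' Y');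
  tens_id : forall X Y, tensm (idm X) (idm Y) = idm (tens X Y);
  tens_comp : forall X X' X'' Y Y' Y'' (g : Hom X' X'') (f : Hom X X')
      (g' : Hom Y' Y'') (f' : Hom Y Y'),
      tensm (comp g f) (comp g' f') = comp (tensm g g') (tensm f f');
  unit : Ob;
  asc : forall X Y Z, Hom (tens (tens X Y) Z) (tens X (tens Y Z));
  asc_inv : forall X Y Z, Hom (tens X (tens Y Z)) (tens (tens X Y) Z);
  asc_invl : forall X Y Z, comp (asc_inv X Y Z) (asc X Y Z) = idm _;
  asc_invr : forall X Y Z, comp (asc X Y Z) (asc_inv X Y Z) = idm _;
  asc_nat : forall X X' Y Y' Z Z' (f : Hom X X') (g : Hom Y Y') (h : Hom Z Z'),
      comp (asc X' Y' Z') (tensm (tensm f g) h)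
      = comp (tensm f (tensm g h)) (asc X Y Z);
  lu : forall X, Hom (tens unit X) X;
  lu_inv : forall X, Hom X (tens unit X);
  lu_invl : forall X, comp (lu_inv X) (lu X) = idm _;
  lu_invr : forall X, comp (lu X) (lu_inv X) = idm _;
  lu_nat : forall X Y (f : Hom X Y), comp f (lu X) = comp (lu Y) (tensm (idm unit) f);
  ru : forall X, Hom (tens X unit) X;
  ru_inv : forall X, Hom X (tens X unit);
  ru_invl : forall X, comp (ru_inv X) (ru X) = idm _;
  ru_invr : forall X, comp (ru X) (ru_inv X) = idm _;
  ru_nat : forall X Y (f : Hom X Y), comp f (ru X) = comp (ru Y) (tensm f (idm unit));
  br : forall X Y, Hom (tens X Y) (tens Y X);
  br_nat : forall X X' Y Y' (f : Hom X X') (g : Hom Y Y'),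
      comp (br X' Y') (tensm f g) = comp (tensm g f) (br X Y);
  br_inv : forall X Y, comp (br Y X) (br X Y) = idm _;
  pentagon : forall W X Y Z,
      comp (asc W X (tens Y Z)) (asc (tens W X) Y Z)
      = comp (tensm (idm W) (asc X Y Z))
             (comp (asc W (tens X Y) Z) (tensm (asc W X Y) (idm Z)));
  triangle : forall X Y,
      comp (tensm (idm X) (lu Y)) (asc X unit Y) = tensm (ru X) (idm Y);
  hexagon : forall X Y Z,
      comp (asc Y Z X) (comp (br X (tens Y Z)) (asc X Y Z))
      = comp (tensm (idm Y) (br X Z))
             (comp (asc Y X Z) (tensm (br X Y) (idm Z)))
}.

Arguments Hom {s}.
Arguments idm {s}.
Arguments comp {s X Y Z}.
Arguments tens {s}.
Arguments tensm {s X X' Y Y'}.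
Arguments unit {s}.
Arguments asc {s}.
Arguments asc_inv {s}.
Arguments lu {s}.
Arguments lu_inv {s}.
Arguments ru {s}.
Arguments ru_inv {s}.
Arguments br {s}.

Section IsoTheory.
Variable M : SMC.

Definition is_iso (X Y : Ob M) (f : Hom X Y) : Prop :=
  exists g : Hom Y X, comp g f = idm X /\ comp f g = idm Y.

Definition iso (X Y : Ob M) : Prop := exists f : Hom X Y, is_iso f.

Definition winv (A : Ob M) : Prop :=
  exists B : Ob M, iso (tens A B) unit /\ iso (tens B A) unit.

Lemma iso_refl X : iso X X.
Proof. exists (idm X), (idm X); rewrite comp_idl; auto. Qed.

Lemma iso_sym X Y : iso X Y -> iso Y X.
Proof. intros [f [g [H1 H2]]]; exists g, f; auto. Qed.

Lemma iso_trans X Y Z : iso X Y -> iso Y Z -> iso X Z.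
Proof.
  intros [f [f' [H1 H2]]] [g [g' [H3 H4]]].
  exists (comp g f), (comp f' g'); split.
  - rewrite comp_assoc, <- (comp_assoc f' g' g), H3, comp_idr; auto.
  - rewrite comp_assoc, <- (comp_assoc g f f'), H2, comp_idr; auto.
Qed.

Lemma iso_tens X X' Y Y' : iso X X' -> iso Y Y' -> iso (tens X Y) (tens X' Y').
Proof.
  intros [f [f' [H1 H2]]] [g [g' [H3 H4]]].
  exists (tensm f g), (tensm f' g');
  rewrite <- !tens_comp, H1, H2, H3, H4, !tens_id; auto.
Qed.

Lemma iso_asc X Y Z : iso (tens (tens X Y) Z) (tens X (tens Y Z)).
Proof. exists (asc X Y Z), (asc_inv X Y Z); split; apply M. Qed.

Lemma iso_lu X : iso (tens unit X) X.
Proof. exists (lu X), (lu_inv X); split; apply M. Qed.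

Lemma iso_ru X : iso (tens X unit) X.
Proof. exists (ru X), (ru_inv X); split; apply M. Qed.

Lemma iso_br X Y : iso (tens X Y) (tens Y X).
Proof. exists (br X Y), (br Y X); split; apply br_inv. Qed.

Lemma winv_unit : winv unit.
Proof. exists unit; split; apply iso_lu. Qed.

Lemma winv_tens A A' : winv A -> winv A' -> winv (tens A A').
Proof.
  intros [B [H1 H2]] [B' [H3 H4]]; exists (tens B' B); split.
  - eapply iso_trans; [apply iso_asc|].
    eapply iso_trans; [apply iso_tens; [apply iso_refl| apply iso_sym, iso_asc]|].
    eapply iso_trans; [apply iso_tens; [apply iso_refl| apply iso_tens; [exact H3|apply iso_refl]]|].
    eapply iso_trans; [apply iso_tens; [apply iso_refl| apply iso_lu]|].
    exact H1.
  - eapply iso_trans; [apply iso_asc|].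
    eapply iso_trans; [apply iso_tens; [apply iso_refl| apply iso_sym, iso_asc]|].
    eapply iso_trans; [apply iso_tens; [apply iso_refl| apply iso_tens; [exact H2|apply iso_refl]]|].
    eapply iso_trans; [apply iso_tens; [apply iso_refl| apply iso_lu]|].
    exact H4.
Qed.

(* The category P(M): morphisms X -> Y are classes [A,f] with A weakly
   invertible and f : X -> Y (x) A.                                    *)
Record Pmor (X Y : Ob M) := {
  pA : Ob M;
  pA_winv : winv pA;
  pf : Hom X (tens Y pA)
}.

Definition Pequiv (X Y : Ob M) (p q : Pmor X Y) : Prop :=
  exists alpha : Hom (pA p) (pA q),
    is_iso alpha /\ comp (tensm (idm Y) alpha) (pf p) = pf q.

Definition Pcomp (X Y Z : Ob M) (g : Pmor Y Z) (f : Pmor X Y) : Pmor X Z :=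
  {| pA := tens (pA g) (pA f);
     pA_winv := winv_tens (pA_winv g) (pA_winv f);
     pf := comp (asc Z (pA g) (pA f)) (comp (tensm (pf g) (idm (pA f))) (pf f)) |}.

Definition Pid (X : Ob M) : Pmor X X :=
  {| pA := unit; pA_winv := winv_unit; pf := ru_inv X |}.

Definition Piso (X Y : Ob M) : Prop :=
  exists (f : Pmor X Y) (g : Pmor Y X),
    Pequiv (Pcomp g f) (Pid X) /\ Pequiv (Pcomp f g) (Pid Y).

End IsoTheory.

Arguments is_iso {M X Y}.
Arguments iso {M}.
Arguments winv {M}.
Arguments Piso {M}.

Definition Quot (T : Type) (R : T -> T -> Prop) : Type :=
  {P : T -> Prop | exists x, P = R x}.

Definition class (T : Type) (R : T -> T -> Prop) (x : T) : Quot R :=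
  exist _ (R x) (ex_intro _ x eq_refl).

Definition rep (T : Type) (R : T -> T -> Prop) (c : Quot R) : T :=
  proj1_sig (constructive_indefinite_description _ (proj2_sig c)).

Lemma Quot_eq T (R : T -> T -> Prop) (c d : Quot R) :
  proj1_sig c = proj1_sig d -> c = d.
Proof.
  destruct c as [P HP], d as [Q HQ]; simpl; intros ->.
  f_equal; apply proof_irrelevance.
Qed.

Lemma class_rep T (R : T -> T -> Prop) (c : Quot R) : class R (rep c) = c.
Proof.
  apply Quot_eq; unfold rep; simpl.
  destruct (constructive_indefinite_description _ (proj2_sig c)) as [x Hx].
  simpl; symmetry; exact Hx.
Qed.

Section QuotEquiv.
Variables (T : Type) (R : T -> T -> Prop).
Hypothesis Rrefl : forall x, R x x.
Hypothesis Rsym : forall x y, R x y -> R y x.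
Hypothesis Rtrans : forall x y z, R x y -> R y z -> R x z.

Lemma class_eq x y : R x y -> class R x = class R y.
Proof.
  intro H; apply Quot_eq; simpl.
  apply functional_extensionality; intro z; apply propositional_extensionality.
  split; intro Hz; eauto.
Qed.

Lemma rep_class x : R (rep (class R x)) x.
Proof.
  assert (E := class_rep (class R x)).
  apply (f_equal (@proj1_sig _ _)) in E; simpl in E.
  apply Rsym; rewrite <- E; apply Rrefl.
Qed.
End QuotEquiv.

Record MonStr := {
  mcar :> Type;
  mop : mcar -> mcar -> mcar;
  mone : mcar
}.
Arguments mop {m}.
Arguments mone {m}.

Record ComMonoid := {
  cm_str :> MonStr;
  cm_assoc : forall x y z : cm_str, mop x (mop y z) = mop (mop x y) z;
  cm_comm : forall x y : cm_str, mop x y = mop y x;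
  cm_unitl : forall x : cm_str, mop mone x = x
}.

Definition mon_hom (A B : MonStr) (f : A -> B) : Prop :=
  (forall x y, f (mop x y) = mop (f x) (f y)) /\ f mone = mone.

Definition mon_iso (A B : MonStr) (f : A -> B) : Prop :=
  mon_hom f /\ exists g : B -> A, (forall x, g (f x) = x) /\ (forall y, f (g y) = y).

Definition KQ (T : Type) (R : T -> T -> Prop) (t : T -> T -> T) (i : T) : MonStr :=
  {| mcar := Quot R; mop := fun c d => class R (t (rep c) (rep d)); mone := class R i |}.

Definition Kmap T T' (R : T -> T -> Prop) (R' : T' -> T' -> Prop) (f : T -> T')
  (c : Quot R) : Quot R' := class R' (f (rep c)).

Definition is_unit (A : ComMonoid) (x : A) : Prop := exists y, mop x y = mone.

Lemma is_unit_mop (A : ComMonoid) (x y : A) :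
  is_unit x -> is_unit y -> is_unit (mop x y).
Proof.
  intros [x' Hx] [y' Hy]; exists (mop y' x').
  rewrite cm_assoc, <- (cm_assoc x y y'), Hy, (cm_comm x mone), cm_unitl; exact Hx.
Qed.

Lemma is_unit_one (A : ComMonoid) : is_unit (@mone A).
Proof. exists mone; apply cm_unitl. Qed.

Definition Ucar (A : ComMonoid) := {x : A | is_unit x}.

Definition Umon (A : ComMonoid) : MonStr :=
  {| mcar := Ucar A;
     mop := fun u v => exist _ (mop (proj1_sig u) (proj1_sig v))
                             (is_unit_mop (proj2_sig u) (proj2_sig v));
     mone := exist _ mone (is_unit_one A) |}.

Definition Urel (A : ComMonoid) (x y : A) : Prop := exists u, is_unit u /\ x = mop u y.

Definition QUmon (A : ComMonoid) : MonStr :=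
  {| mcar := Quot (@Urel A);
     mop := fun c d => class (@Urel A) (mop (rep c) (rep d));
     mone := class (@Urel A) mone |}.

Definition Uincl (A : ComMonoid) (u : Ucar A) : A := proj1_sig u.
Definition Uquot (A : ComMonoid) (x : A) : Quot (@Urel A) := class (@Urel A) x.

Section K.
Variable M : SMC.

Definition Kset : MonStr := KQ (@iso M) (@tens M) unit.

Lemma Kset_assoc (x y z : Kset) : mop x (mop y z) = mop (mop x y) z.
Proof.
  simpl; apply class_eq; eauto using iso_refl, iso_sym, iso_trans.
  eapply iso_trans; [apply iso_tens; [apply iso_refl| apply rep_class]|];
    eauto using iso_refl, iso_sym, iso_trans.
  eapply iso_trans; [|apply iso_sym, iso_tens; [apply rep_class|apply iso_refl]];
    eauto using iso_refl, iso_sym, iso_trans.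
  apply iso_sym, iso_asc.
Qed.

Lemma Kset_comm (x y : Kset) : mop x y = mop y x.
Proof. simpl; apply class_eq; eauto using iso_refl, iso_sym, iso_trans, iso_br. Qed.

Lemma Kset_unitl (x : Kset) : mop mone x = x.
Proof.
  simpl; rewrite <- (class_rep x) at 2; apply class_eq;
    eauto using iso_refl, iso_sym, iso_trans.
  eapply iso_trans; [apply iso_tens; [apply rep_class|apply iso_refl]|];
    eauto using iso_refl, iso_sym, iso_trans.
  apply iso_lu.
Qed.

Definition KM : ComMonoid := {| cm_str := Kset; cm_assoc := Kset_assoc;
  cm_comm := Kset_comm; cm_unitl := Kset_unitl |}.

(* Pic(M): weakly invertible objects and isomorphisms; two objects of
   Pic(M) are isomorphic in Pic(M) iff they are isomorphic in M. *)
Definition PicOb := {A : Ob M | winv A}.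
Definition Pic_iso (A B : PicOb) : Prop := iso (proj1_sig A) (proj1_sig B).
Definition Pic_tens (A B : PicOb) : PicOb :=
  exist _ (tens (proj1_sig A) (proj1_sig B)) (winv_tens (proj2_sig A) (proj2_sig B)).
Definition Pic_unit : PicOb := exist _ unit (winv_unit M).

Definition KPic : MonStr := KQ Pic_iso Pic_tens Pic_unit.

(* Pure[M] = K(P(M)) (same objects and tensor of objects as M) *)
Definition KP : MonStr := KQ (@Piso M) (@tens M) unit.

Definition K_iota : KPic -> KM := @Kmap _ _ Pic_iso (@iso M) (@proj1_sig _ _).
Definition K_pi : KM -> KP := @Kmap _ _ (@iso M) (@Piso M) (fun X => X).

End K.

Record SMFunctor (M N : SMC) := {
  Fo : Ob M -> Ob N;
  Fm : forall X Y : Ob M, Hom X Y -> Hom (Fo X) (Fo Y);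
  F_id : forall X, Fm (idm X) = idm (Fo X);
  F_comp : forall X Y Z (g : Hom Y Z) (f : Hom X Y), Fm (comp g f) = comp (Fm g) (Fm f);
  Fmu : forall X Y, Hom (tens (Fo X) (Fo Y)) (Fo (tens X Y));
  Fmu_iso : forall X Y, is_iso (Fmu X Y);
  Fmu_nat : forall X X' Y Y' (f : Hom X X') (g : Hom Y Y'),
      comp (Fmu X' Y') (tensm (Fm f) (Fm g)) = comp (Fm (tensm f g)) (Fmu X Y);
  Feps : Hom unit (Fo unit);
  Feps_iso : is_iso Feps;
  F_asc : forall X Y Z,
      comp (Fm (asc X Y Z)) (comp (Fmu (tens X Y) Z) (tensm (Fmu X Y) (idm (Fo Z))))
      = comp (Fmu X (tens Y Z)) (comp (tensm (idm (Fo X)) (Fmu Y Z))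
                                      (asc (Fo X) (Fo Y) (Fo Z)));
  F_lu : forall X,
      lu (Fo X) = comp (Fm (lu X)) (comp (Fmu unit X) (tensm Feps (idm (Fo X))));
  F_ru : forall X,
      ru (Fo X) = comp (Fm (ru X)) (comp (Fmu X unit) (tensm (idm (Fo X)) Feps));
  F_br : forall X Y,
      comp (Fm (br X Y)) (Fmu X Y) = comp (Fmu Y X) (br (Fo X) (Fo Y))
}.
Arguments Fo {M N}.
Arguments Fm {M N} _ {X Y}.

Definition sm_equivalence (M N : SMC) (F : SMFunctor M N) : Prop :=
  (forall X Y (g : Hom (Fo F X) (Fo F Y)), exists f : Hom X Y, Fm F f = g) /\
  (forall X Y (f f' : Hom X Y), Fm F f = Fm F f' -> f = f') /\
  (forall Y : Ob N, exists X : Ob M, iso (Fo F X) Y).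

Definition K_F (M N : SMC) (F : SMFunctor M N) : KM M -> KM N :=
  @Kmap _ _ (@iso M) (@iso N) (Fo F).

From Stdlib Require Import ClassicalEpsilon ProofIrrelevance FinFun Setoid Morphisms.

Set Implicit Arguments.
Unset Strict Implicit.

(* The classes of weakly invertible objects are exactly the units of K(M), so
   K(iota) is an injective homomorphism onto U(K M).  Two objects are isomorphic
   in P(M) iff X ~= Y (x) A for some weakly invertible A: if [A, s] is an
   isomorphism of P(M), its two composites with the inverse being equivalent to
   identities force s to be invertible in M; conversely an invertible s makes
   [A, s] have a right inverse which itself has a right inverse.  Hence K(pi) is
   surjective and its fibres are the cosets of U(K M).  These two properties
   characterise U(K M) -> K M and K M -> K M / U(K M) up to isomorphism under the
   respective maps, which gives both identifications at once and lets them be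
   transported along the isomorphism K(F) induced by an equivalence F. *)

(** * Quotients and induced maps on classes *)

Section Quotient.
Context {T : Type} (R : T -> T -> Prop) {R_equiv : Equivalence R}.

Lemma eq_class_iff x y : class R x = class R y <-> R x y.
Proof.
  split.
  - intro E. apply (f_equal (fun c => proj1_sig c y)) in E; simpl in E.
    rewrite E; reflexivity.
  - apply class_eq; intros; [symmetry | etransitivity]; eauto.
Qed.

Lemma rep_class_equiv x : R (rep (class R x)) x.
Proof. apply rep_class; intros; [reflexivity | symmetry]; auto. Qed.

End Quotient.

Arguments eq_class_iff {T} R {R_equiv} x y.
Arguments rep_class_equiv {T} R {R_equiv} x.

Section KQ.
Context {T T' : Type} (R : T -> T -> Prop) (R' : T' -> T' -> Prop)
  {R_equiv : Equivalence R} {R'_equiv : Equivalence R'}.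

Lemma KQ_mop_class (t : T -> T -> T) (i : T) x y :
  Proper (R ==> R ==> R) t -> mop (class R x : KQ R t i) (class R y) = class R (t x y).
Proof. intro Ht; apply (eq_class_iff R); now rewrite !(rep_class_equiv R). Qed.

Variable f : T -> T'.
Hypothesis f_proper : Proper (R ==> R') f.

Lemma Kmap_class x : Kmap R' f (class R x) = class R' (f x).
Proof. apply (eq_class_iff R'), f_proper, (rep_class_equiv R). Qed.

Lemma Kmap_hom (t : T -> T -> T) (i : T) (t' : T' -> T' -> T') (i' : T') :
  Proper (R' ==> R' ==> R') t' ->
  (forall x y, R' (f (t x y)) (t' (f x) (f y))) -> R' (f i) i' ->
  mon_hom (A := KQ R t i) (B := KQ R' t' i') (Kmap R' f).
Proof.
  intros Ht' f_tens f_unit; split; [intros c d |]; simpl; rewrite Kmap_class;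
    apply (eq_class_iff R'); [| exact f_unit].
  rewrite f_tens; apply Ht'; symmetry; apply (rep_class_equiv R').
Qed.

Lemma Kmap_injective :
  (forall x y, R' (f x) (f y) -> R x y) -> Injective (@Kmap _ _ R R' f).
Proof.
  intros f_reflect c d E.
  rewrite <- (class_rep c), <- (class_rep d).
  apply (eq_class_iff R), f_reflect, (eq_class_iff R'), E.
Qed.

Lemma Kmap_surjective : (forall y, exists x, R' (f x) y) -> Surjective (@Kmap _ _ R R' f).
Proof.
  intros f_ess d. destruct (f_ess (rep d)) as [x Hx].
  exists (class R x). rewrite Kmap_class, <- (class_rep d).
  apply (eq_class_iff R'), Hx.
Qed.

End KQ.

(** * Units and unit quotients of commutative monoids *)

Section MonoidIsomorphisms.
Variables A B C : MonStr.

Lemma mon_iso_bij (f : A -> B) : mon_hom f -> Injective f -> Surjective f -> mon_iso f.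
Proof.
  intros Hf Hinj Hsurj; split; [exact Hf |].
  set (g y := proj1_sig (constructive_indefinite_description _ (Hsurj y))).
  assert (Hg : forall y, f (g y) = y).
  { intro y; exact (proj2_sig (constructive_indefinite_description _ (Hsurj y))). }
  exists g; split; [intro x; apply Hinj |]; auto.
Qed.

Lemma mon_iso_inv (f : A -> B) :
  mon_iso f ->
  exists g : B -> A, mon_iso g /\ (forall x, g (f x) = x) /\ (forall y, f (g y) = y).
Proof.
  intros [[Hf1 Hf2] [g [H1 H2]]]. exists g; repeat split; auto.
  - intros x y. rewrite <- (H2 x), <- (H2 y), <- Hf1, !H1. reflexivity.
  - rewrite <- Hf2, H1; reflexivity.
  - exists f; split; auto.
Qed.

Lemma mon_iso_comp (f : A -> B) (g : B -> C) :
  mon_iso f -> mon_iso g -> mon_iso (fun x => g (f x)).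
Proof.
  intros [[Hf1 Hf2] [f' [Hf3 Hf4]]] [[Hg1 Hg2] [g' [Hg3 Hg4]]].
  repeat split.
  - intros x y; rewrite Hf1, Hg1; reflexivity.
  - rewrite Hf2, Hg2; reflexivity.
  - exists (fun z => f' (g' z)); split; intros; [rewrite Hg3, Hf3 | rewrite Hf4, Hg4]; auto.
Qed.

End MonoidIsomorphisms.

Instance Urel_equiv (A : ComMonoid) : Equivalence (@Urel A).
Proof.
  split.
  - intro x. exists mone; split; [apply is_unit_one | rewrite cm_unitl; reflexivity].
  - intros x y [u [[v Hv] ->]]. exists v; split.
    + exists u; rewrite cm_comm; exact Hv.
    + rewrite cm_assoc, (cm_comm v u), Hv, cm_unitl; reflexivity.
  - intros x y z [u [Hu ->]] [v [Hv ->]].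
    exists (mop u v); split; [apply is_unit_mop; auto | apply cm_assoc].
Qed.

Lemma Uquot_eq_iff (A : ComMonoid) (x y : A) : Uquot x = Uquot y <-> Urel x y.
Proof. apply (eq_class_iff (@Urel A)). Qed.

Lemma mon_hom_is_unit (A B : ComMonoid) (f : A -> B) (x : A) :
  mon_hom f -> is_unit x -> is_unit (f x).
Proof. intros [Hm H1] [y Hy]; exists (f y); rewrite <- Hm, Hy; exact H1. Qed.

Lemma mon_hom_Urel (A B : ComMonoid) (f : A -> B) (x y : A) :
  mon_hom f -> Urel x y -> Urel (f x) (f y).
Proof.
  intros Hf [u [Hu ->]]. exists (f u); split; [apply mon_hom_is_unit |]; auto.
  apply Hf.
Qed.

Definition units_embedding (P : MonStr) (A : ComMonoid) (i : P -> A) : Prop :=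
  mon_hom i /\ Injective i /\ (forall x, is_unit x <-> exists c, i c = x).

Definition unit_quotient_map (A : ComMonoid) (Q : MonStr) (p : A -> Q) : Prop :=
  mon_hom p /\ Surjective p /\ (forall x y, p x = p y <-> Urel x y).

Section UnitsEmbedding.
Variables (P : MonStr) (A : ComMonoid) (i : P -> A).
Hypothesis i_emb : units_embedding i.

Lemma units_embedding_iso :
  exists phi : P -> Umon A, mon_iso phi /\ forall c, Uincl (phi c) = i c.
Proof.
  destruct i_emb as [Hhom [Hinj Himg]].
  assert (Hu : forall c, is_unit (i c)) by (intro c; apply Himg; eauto).
  exists (fun c => exist _ (i c) (Hu c) : Umon A); split; [| reflexivity].
  apply mon_iso_bij.
  - split; [intros c d |]; apply subset_eq_compat, Hhom.
  - intros c d E. apply Hinj, (f_equal (@proj1_sig _ _) E).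
  - intros [x Hx]. destruct (proj1 (Himg x) Hx) as [c <-].
    exists c. apply subset_eq_compat; reflexivity.
Qed.

Lemma units_embedding_comp (B : ComMonoid) (f : A -> B) :
  mon_iso f -> units_embedding (fun c => f (i c)).
Proof.
  intro Hf. destruct (mon_iso_inv Hf) as [g [Hg [Hgf Hfg]]].
  destruct i_emb as [[Hi1 Hi2] [Hinj Himg]]. destruct Hf as [[Hf1 Hf2] _].
  split; [split | split].
  - intros c d; rewrite Hi1; apply Hf1.
  - rewrite Hi2; apply Hf2.
  - intros c d E. apply Hinj. rewrite <- (Hgf (i c)), E; apply Hgf.
  - intro y; split.
      + intro Hy. destruct (proj1 (Himg (g y)) (mon_hom_is_unit (proj1 Hg) Hy)) as [c Hc].
      exists c. rewrite Hc; apply Hfg.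
    + intros [c <-]. apply mon_hom_is_unit; [split; auto | apply Himg; eauto].
Qed.

End UnitsEmbedding.

Lemma units_embedding_unique (P P' : MonStr) (A : ComMonoid) (i : P -> A) (j : P' -> A) :
  units_embedding i -> units_embedding j ->
  exists phi : P -> P', mon_iso phi /\ forall c, j (phi c) = i c.
Proof.
  intros Hi Hj.
  destruct (units_embedding_iso Hi) as [phi_i [Hphi_i Ei]].
  destruct (units_embedding_iso Hj) as [phi_j [Hphi_j Ej]].
  destruct (mon_iso_inv Hphi_j) as [psi_j [Hpsi_j [_ Kj]]].
  exists (fun c => psi_j (phi_i c)); split; [apply mon_iso_comp; auto |].
  intro c. rewrite <- Ej, Kj. apply Ei.
Qed.

Section UnitQuotient.
Variables (A : ComMonoid) (Q : MonStr) (p : A -> Q).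
Hypothesis p_quot : unit_quotient_map p.

Lemma unit_quotient_iso :
  exists psi : Q -> QUmon A, mon_iso psi /\ forall x, psi (p x) = Uquot x.
Proof.
  destruct p_quot as [[Hp1 Hp2] [Hsurj Hker]].
  set (chi (c : QUmon A) := p (rep c)).
  assert (Hchi : forall x, chi (Uquot x) = p x).
  { intro x; apply Hker, (rep_class_equiv (@Urel A)). }
  assert (Hiso : mon_iso chi).
  { apply mon_iso_bij.
    - split; [intros c d |]; (etransitivity; [apply Hchi |]); [apply Hp1 | apply Hp2].
    - intros c d E. rewrite <- (class_rep c), <- (class_rep d). apply Uquot_eq_iff, Hker, E.
    - intro q. destruct (Hsurj q) as [x <-]. exists (Uquot x). apply Hchi. }
  destruct (mon_iso_inv Hiso) as [psi [Hpsi [K _]]].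
  exists psi; split; [exact Hpsi |].
  intro x. rewrite <- Hchi. apply K.
Qed.

Lemma unit_quotient_map_comp (B : ComMonoid) (f : B -> A) :
  mon_iso f -> unit_quotient_map (fun x => p (f x)).
Proof.
  intro Hf. destruct (mon_iso_inv Hf) as [g [Hg [Hgf Hfg]]].
  destruct p_quot as [[Hp1 Hp2] [Hsurj Hker]]. destruct Hf as [[Hf1 Hf2] _].
  split; [split | split].
  - intros x y; rewrite Hf1; apply Hp1.
  - rewrite Hf2; apply Hp2.
  - intro q. destruct (Hsurj q) as [x <-]. exists (g x). rewrite Hfg; reflexivity.
  - intros x y; split.
    + intro E. rewrite <- (Hgf x), <- (Hgf y). apply mon_hom_Urel, Hker, E. apply Hg.
    + intro E. apply Hker, mon_hom_Urel, E. split; auto.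
Qed.

End UnitQuotient.

Lemma unit_quotient_unique (A : ComMonoid) (Q Q' : MonStr) (p : A -> Q) (q : A -> Q') :
  unit_quotient_map p -> unit_quotient_map q ->
  exists phi : Q -> Q', mon_iso phi /\ forall x, phi (p x) = q x.
Proof.
  intros Hp Hq.
  destruct (unit_quotient_iso Hp) as [psi_p [Hpsi_p Ep]].
  destruct (unit_quotient_iso Hq) as [psi_q [Hpsi_q Eq]].
  destruct (mon_iso_inv Hpsi_q) as [chi_q [Hchi_q [Kq _]]].
  exists (fun c => chi_q (psi_p c)); split; [apply mon_iso_comp; auto |].
  intro x. rewrite Ep, <- Eq. apply Kq.
Qed.

(** * Coherence in a symmetric monoidal category *)

Instance iso_equiv (M : SMC) : Equivalence (@iso M).
Proof. split; [exact (@iso_refl M) | exact (@iso_sym M) | exact (@iso_trans M)]. Qed.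

Instance tens_iso_proper (M : SMC) : Proper (@iso M ==> @iso M ==> @iso M) (@tens M).
Proof. intros X X' HX Y Y' HY; exact (iso_tens HX HY). Qed.

Section Coherence.
Variable M : SMC.
Implicit Types X Y Z W A B : Ob M.

Lemma tens_comp_l X X' X'' Y (g : Hom X' X'') (f : Hom X X') :
  tensm (comp g f) (idm Y) = comp (tensm g (idm Y)) (tensm f (idm Y)).
Proof. rewrite <- tens_comp, comp_idl; reflexivity. Qed.

Lemma tens_comp_r X Y Y' Y'' (g : Hom Y' Y'') (f : Hom Y Y') :
  tensm (idm X) (comp g f) = comp (tensm (idm X) g) (tensm (idm X) f).
Proof. rewrite <- tens_comp, comp_idl; reflexivity. Qed.

Lemma asc_nat_l X X' Y Z (f : Hom X X') :
  comp (asc X' Y Z) (tensm (tensm f (idm Y)) (idm Z))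
  = comp (tensm f (idm (tens Y Z))) (asc X Y Z).
Proof. rewrite <- (tens_id Y Z); apply asc_nat. Qed.

Lemma asc_nat_r X Y Z Z' (h : Hom Z Z') :
  comp (asc X Y Z') (tensm (idm (tens X Y)) h)
  = comp (tensm (idm X) (tensm (idm Y) h)) (asc X Y Z).
Proof. rewrite <- tens_id; apply asc_nat. Qed.

Lemma comp_cancel_l X Y W (f : Hom Y X) (g : Hom X Y) (h : Hom W X) :
  comp f g = idm X -> comp f (comp g h) = h.
Proof. intro E; rewrite comp_assoc, E, comp_idl; reflexivity. Qed.

Lemma ru_inv_nat X Y (f : Hom X Y) :
  comp (tensm f (idm unit)) (ru_inv X) = comp (ru_inv Y) f.
Proof.
  rewrite <- (comp_idl (comp (tensm f (idm unit)) (ru_inv X))), <- (ru_invl Y).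
  rewrite <- !comp_assoc, (comp_assoc (ru Y)), <- ru_nat, <- comp_assoc, ru_invr, comp_idr.
  reflexivity.
Qed.

Lemma tens_unit_inj X Y (u v : Hom X Y) :
  tensm u (idm unit) = tensm v (idm unit) -> u = v.
Proof.
  intro E.
  assert (Hw : forall w : Hom X Y, w = comp (ru Y) (comp (tensm w (idm unit)) (ru_inv X))).
  { intro w. rewrite ru_inv_nat, comp_cancel_l; [reflexivity | apply ru_invr]. }
  rewrite (Hw u), (Hw v), E; reflexivity.
Qed.

Lemma asc_inj X Y Z W (f g : Hom W (tens (tens X Y) Z)) :
  comp (asc X Y Z) f = comp (asc X Y Z) g -> f = g.
Proof.
  intro E. rewrite <- (comp_cancel_l f (asc_invl X Y Z)), <- (comp_cancel_l g (asc_invl X Y Z)), E.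
  reflexivity.
Qed.

(* Kelly's redundant coherence axiom, recovered from the pentagon and the triangle. *)
Lemma ru_tens X Y : comp (tensm (idm X) (ru Y)) (asc X Y unit) = ru (tens X Y).
Proof.
  apply tens_unit_inj, asc_inj.
  rewrite <- triangle, comp_assoc, asc_nat_r, <- comp_assoc, pentagon.
  rewrite comp_assoc, <- tens_comp_r, triangle.
  rewrite comp_assoc, <- asc_nat, <- comp_assoc, <- tens_comp_l. reflexivity.
Qed.

Lemma is_iso_id X : is_iso (idm X).
Proof. exists (idm X); rewrite comp_idl; auto. Qed.

Lemma is_iso_comp X Y Z (g : Hom Y Z) (f : Hom X Y) :
  is_iso g -> is_iso f -> is_iso (comp g f).
Proof.
  intros [g' [Hg1 Hg2]] [f' [Hf1 Hf2]]. exists (comp f' g'); split.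
  - rewrite comp_assoc, <- (comp_assoc f' g' g), Hg1, comp_idr; auto.
  - rewrite comp_assoc, <- (comp_assoc g f f'), Hf2, comp_idr; auto.
Qed.

Lemma is_iso_tens X X' Y Y' (f : Hom X X') (g : Hom Y Y') :
  is_iso f -> is_iso g -> is_iso (tensm f g).
Proof.
  intros [f' [Hf1 Hf2]] [g' [Hg1 Hg2]]. exists (tensm f' g').
  rewrite <- !tens_comp, Hf1, Hf2, Hg1, Hg2, !tens_id; auto.
Qed.

Lemma is_iso_asc X Y Z : is_iso (asc X Y Z).
Proof. exists (asc_inv X Y Z); split; apply M. Qed.

Lemma is_iso_asc_inv X Y Z : is_iso (asc_inv X Y Z).
Proof. exists (asc X Y Z); split; apply M. Qed.

Lemma is_iso_lu X : is_iso (lu X).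
Proof. exists (lu_inv X); split; apply M. Qed.

Lemma is_iso_ru X : is_iso (ru X).
Proof. exists (ru_inv X); split; apply M. Qed.

Lemma is_iso_ru_inv X : is_iso (ru_inv X).
Proof. exists (ru X); split; apply M. Qed.

Lemma is_iso_of_inverses X Y (h : Hom X Y) (r l : Hom Y X) :
  comp h r = idm Y -> comp l h = idm X -> is_iso h.
Proof.
  intros Er El. exists r; split; auto.
  replace r with l; auto.
  rewrite <- (comp_idr l), <- Er, comp_assoc, El, comp_idl; reflexivity.
Qed.

Lemma iso_tens_interchange X Y A B :
  iso (tens (tens X A) (tens Y B)) (tens (tens X Y) (tens A B)).
Proof.
  rewrite (iso_asc X A), <- (iso_asc A Y B), (iso_br A Y), (iso_asc Y A B).
  symmetry; apply iso_asc.
Qed.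

End Coherence.

(** * Isomorphism in P(M) *)

Instance Pequiv_equiv (M : SMC) (X Y : Ob M) : Equivalence (@Pequiv M X Y).
Proof.
  split.
  - intro p. exists (idm _); split; [apply is_iso_id |]. rewrite tens_id, comp_idl; auto.
  - intros p q [a [[a' [H1 H2]] E]]. exists a'; split; [exists a; auto |].
    rewrite <- E, comp_assoc, <- tens_comp_r, H1, tens_id, comp_idl; auto.
  - intros p q r [a [Ha E]] [b [Hb E']]. exists (comp b a); split; [apply is_iso_comp; auto |].
    rewrite tens_comp_r, <- comp_assoc, E, E'; auto.
Qed.

Section PCategory.
Variable M : SMC.
Implicit Types X Y Z W A : Ob M.

Lemma Pcomp_congr_l X Y Z (g g' : Pmor Y Z) (f : Pmor X Y) :
  Pequiv g g' -> Pequiv (Pcomp g f) (Pcomp g' f).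
Proof.
  intros [a [Ha E]]. exists (tensm a (idm _)); split; [apply is_iso_tens, is_iso_id; auto |].
  simpl. rewrite <- E, comp_assoc, <- asc_nat, <- !comp_assoc. f_equal.
  rewrite tens_comp_l, comp_assoc. reflexivity.
Qed.

Lemma Pcomp_congr_r X Y Z (g : Pmor Y Z) (f f' : Pmor X Y) :
  Pequiv f f' -> Pequiv (Pcomp g f) (Pcomp g f').
Proof.
  intros [a [Ha E]]. exists (tensm (idm _) a); split; [apply is_iso_tens, Ha; apply is_iso_id |].
  simpl. rewrite <- E, comp_assoc, <- asc_nat, <- !comp_assoc. f_equal.
  rewrite !comp_assoc, <- !tens_comp, tens_id, !comp_idl, !comp_idr. reflexivity.
Qed.

Global Instance Pcomp_proper X Y Z :
  Proper (@Pequiv M Y Z ==> @Pequiv M X Y ==> @Pequiv M X Z) (@Pcomp M X Y Z).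
Proof.
  intros g g' Eg f f' Ef.
  transitivity (Pcomp g' f); [apply Pcomp_congr_l | apply Pcomp_congr_r]; assumption.
Qed.

Lemma Pcomp_assoc X Y Z W (h : Pmor Z W) (g : Pmor Y Z) (f : Pmor X Y) :
  Pequiv (Pcomp (Pcomp h g) f) (Pcomp h (Pcomp g f)).
Proof.
  exists (asc (pA h) (pA g) (pA f)); split; [apply is_iso_asc |]. simpl.
  rewrite !tens_comp_l, <- !comp_assoc.
  rewrite (comp_assoc (asc W _ _) (tensm (asc W _ _) _)).
  rewrite (comp_assoc (tensm (idm W) _)), <- pentagon, <- comp_assoc. f_equal.
  rewrite comp_assoc, asc_nat_l, <- comp_assoc. reflexivity.
Qed.

Lemma Pcomp_id_l X Y (f : Pmor X Y) : Pequiv (Pcomp (Pid Y) f) f.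
Proof.
  exists (lu (pA f)); split; [apply is_iso_lu |]. simpl.
  rewrite comp_assoc, triangle, comp_assoc, <- tens_comp_l, ru_invr, tens_id, comp_idl.
  reflexivity.
Qed.

Lemma Pcomp_id_r X Y (f : Pmor X Y) : Pequiv (Pcomp f (Pid X)) f.
Proof.
  exists (ru (pA f)); split; [apply is_iso_ru |]. simpl.
  rewrite ru_inv_nat, comp_assoc, ru_tens, comp_assoc, ru_invr, comp_idl.
  reflexivity.
Qed.

Lemma Pequiv_of_inverses X Y (f h : Pmor X Y) (g : Pmor Y X) :
  Pequiv (Pcomp f g) (Pid Y) -> Pequiv (Pcomp g h) (Pid X) -> Pequiv f h.
Proof.
  intros Efg Egh.
  rewrite <- (Pcomp_id_r f), <- Egh, <- Pcomp_assoc, Efg. apply Pcomp_id_l.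
Qed.

End PCategory.

Section PIsomorphism.
Variable M : SMC.
Implicit Types X Y Z A B : Ob M.

Lemma Pmor_right_inverse X Y (f : Pmor X Y) :
  is_iso (pf f) -> exists g : Pmor Y X, is_iso (pf g) /\ Pequiv (Pcomp f g) (Pid Y).
Proof.
  destruct f as [A wA s]; simpl. intros [s' [Hs1 Hs2]].
  destruct wA as [B [[b [b' [Hb1 Hb2]]] HBA]].
  assert (wB : winv B) by (exists A; split; [exact HBA | exists b, b'; auto]).
  exists (Build_Pmor wB (comp (tensm s' (idm B))
           (comp (asc_inv Y A B) (comp (tensm (idm Y) b') (ru_inv Y))))); simpl.
  split.
  - repeat apply is_iso_comp; repeat apply is_iso_tens;
      auto using is_iso_id, is_iso_asc_inv, is_iso_ru_inv.
    + exists s; auto.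
    + exists b; auto.
  - exists b; split; [exists b'; auto |]. simpl.
    assert (Es : comp (tensm s (idm B)) (tensm s' (idm B)) = idm _).
    { rewrite <- tens_comp_l, Hs2, tens_id; reflexivity. }
    assert (Eb : comp (tensm (idm Y) b) (tensm (idm Y) b') = idm _).
    { rewrite <- tens_comp_r, Hb2, tens_id; reflexivity. }
    rewrite (comp_cancel_l _ Es), (comp_cancel_l _ (asc_invr Y A B)), (comp_cancel_l _ Eb).
    reflexivity.
Qed.

Lemma Piso_of_iso_tens X Y A : winv A -> iso X (tens Y A) -> Piso X Y.
Proof.
  intros wA [s Hs].
  destruct (Pmor_right_inverse (f := Build_Pmor wA s) Hs) as [g [Hg Efg]].
  destruct (Pmor_right_inverse Hg) as [h [_ Egh]].
  exists (Build_Pmor wA s), g; split; [| exact Efg].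
  rewrite (Pequiv_of_inverses Efg Egh). exact Egh.
Qed.

Lemma Pcomp_Pid_retraction X Y (f : Pmor X Y) (g : Pmor Y X) :
  Pequiv (Pcomp g f) (Pid X) ->
  exists c : Hom (tens (tens X (pA g)) (pA f)) X,
    is_iso c /\ comp c (comp (tensm (pf g) (idm (pA f))) (pf f)) = idm X.
Proof.
  intros [a [Ha Ea]]; simpl in Ea.
  exists (comp (ru X) (comp (tensm (idm X) a) (asc X (pA g) (pA f)))); split.
  - repeat apply is_iso_comp; auto using is_iso_ru, is_iso_tens, is_iso_id, is_iso_asc.
  - rewrite <- !comp_assoc. etransitivity; [exact (f_equal (comp (ru X)) Ea) | apply ru_invr].
Qed.

Lemma iso_tens_of_Piso X Y : Piso X Y -> exists A, winv A /\ iso X (tens Y A).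
Proof.
  intros [f [g [Egf Efg]]].
  destruct (Pcomp_Pid_retraction Egf) as [c [[c' [Hc1 Hc2]] Ec]].
  destruct (Pcomp_Pid_retraction Efg) as [d [_ Ed]].
  exists (pA f); split; [apply pA_winv |].
  symmetry. exists (comp c (tensm (pf g) (idm (pA f)))).
  (* This left inverse of [pf f] has itself a left inverse, built from the
     retraction [d o (pf f (x) pA g)] of [pf g]. *)
  apply (is_iso_of_inverses (r := pf f)
           (l := comp (tensm (comp d (tensm (pf f) (idm (pA g)))) (idm (pA f))) c')).
  - rewrite <- comp_assoc; exact Ec.
  - rewrite <- comp_assoc, (comp_cancel_l _ Hc1), <- tens_comp_l, <- comp_assoc, Ed, tens_id.
    reflexivity.
Qed.

Lemma Piso_iff X Y : Piso X Y <-> exists A, winv A /\ iso X (tens Y A).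
Proof.
  split; [apply iso_tens_of_Piso |]. intros [A [wA HA]]; exact (Piso_of_iso_tens wA HA).
Qed.

Lemma iso_Piso X Y : iso X Y -> Piso X Y.
Proof.
  intro H. apply Piso_iff. exists unit; split; [apply winv_unit |].
  rewrite iso_ru; exact H.
Qed.

Global Instance Piso_equiv : Equivalence (@Piso M).
Proof.
  split.
  - intro X. apply iso_Piso; reflexivity.
  - intros X Y [A [[B [HAB HBA]] HX]]%Piso_iff. apply Piso_iff.
    exists B; split; [exists A; auto |].
    rewrite HX, iso_asc, HAB. symmetry; apply iso_ru.
  - intros X Y Z [A [wA HX]]%Piso_iff [B [wB HY]]%Piso_iff. apply Piso_iff.
    exists (tens B A); split; [apply winv_tens; auto |].
    rewrite HX, HY; apply iso_asc.
Qed.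

Global Instance tens_Piso_proper : Proper (@Piso M ==> @Piso M ==> @Piso M) (@tens M).
Proof.
  intros X X' [A [wA HX]]%Piso_iff Y Y' [B [wB HY]]%Piso_iff. apply Piso_iff.
  exists (tens A B); split; [apply winv_tens; auto |].
  rewrite HX, HY; apply iso_tens_interchange.
Qed.

End PIsomorphism.

(** * The exact sequence Pic[M] -> K(M) -> Pure[M] *)

Instance Pic_iso_equiv (M : SMC) : Equivalence (@Pic_iso M).
Proof.
  split; intro; unfold Pic_iso; [reflexivity | intros; symmetry | intros; etransitivity]; eauto.
Qed.

Section KM.
Variable M : SMC.
Implicit Types X Y A : Ob M.

Lemma KM_mop_class X Y : mop (class iso X : KM M) (class iso Y) = class iso (tens X Y).
Proof. apply KQ_mop_class; typeclasses eauto. Qed.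

Lemma is_unit_class A : is_unit (class iso A : KM M) <-> winv A.
Proof.
  split.
  - intros [y Hy]. rewrite <- (class_rep y), KM_mop_class in Hy.
    apply (eq_class_iff (@iso M)) in Hy.
    exists (rep y); split; [exact Hy | rewrite iso_br; exact Hy].
  - intros [B [HAB _]]. exists (class iso B). rewrite KM_mop_class.
    apply (eq_class_iff (@iso M)), HAB.
Qed.

Lemma Urel_class_iff X Y : Urel (class iso X : KM M) (class iso Y) <-> Piso X Y.
Proof.
  rewrite Piso_iff. split.
  - intros [u [Hu E]]. rewrite <- (class_rep u), KM_mop_class in E.
    rewrite <- (class_rep u), is_unit_class in Hu.
    apply (eq_class_iff (@iso M)) in E.
    exists (rep u); split; [exact Hu |]. rewrite E; apply iso_br.
  - intros [A [wA HA]]. exists (class iso A); split; [apply is_unit_class, wA |].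
    rewrite KM_mop_class. apply (eq_class_iff (@iso M)). rewrite HA; apply iso_br.
Qed.

Lemma K_iota_units_embedding : units_embedding (@K_iota M).
Proof.
  split; [| split].
  - apply Kmap_hom; try typeclasses eauto; try (intros; reflexivity). intros A B H; exact H.
  - apply Kmap_injective; try typeclasses eauto. intros A B H; exact H.
  - intro x. split.
    + rewrite <- (class_rep x), is_unit_class. intro wx.
      exists (class (@Pic_iso M) (exist _ (rep x) wx)).
      apply (eq_class_iff (@iso M)), (rep_class_equiv (@Pic_iso M)).
    + intros [c <-]. apply is_unit_class, (proj2_sig (rep c)).
Qed.

Lemma K_pi_unit_quotient : unit_quotient_map (@K_pi M).
Proof.
  assert (id_proper : Proper (@iso M ==> @Piso M) (fun X => X)) by exact (@iso_Piso M).
  split; [| split].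
  - apply Kmap_hom; try typeclasses eauto; intros; reflexivity.
  - apply Kmap_surjective; try typeclasses eauto. intro Y; exists Y; reflexivity.
  - intros x y. unfold K_pi, Kmap.
    rewrite (eq_class_iff (@Piso M)), <- Urel_class_iff, !class_rep. reflexivity.
Qed.

End KM.

Section SMEquivalence.
Variables (M N : SMC) (F : SMFunctor M N).

Lemma F_preserves_iso (X Y : Ob M) : iso X Y -> iso (Fo F X) (Fo F Y).
Proof.
  intros [f [g [H1 H2]]]. exists (Fm F f), (Fm F g).
  rewrite <- !F_comp, H1, H2, !F_id; auto.
Qed.

Lemma F_reflects_iso (X Y : Ob M) :
  sm_equivalence F -> iso (Fo F X) (Fo F Y) -> iso X Y.
Proof.
  intros [Hfull [Hfaith _]] [g [g' [H1 H2]]].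
  destruct (Hfull _ _ g) as [f Hf]. destruct (Hfull _ _ g') as [f' Hf'].
  exists f, f'; split; apply Hfaith; rewrite F_comp, F_id, Hf, Hf'; auto.
Qed.

Lemma K_F_iso : sm_equivalence F -> mon_iso (A := KM M) (B := KM N) (K_F F).
Proof.
  intro HF. assert (F_proper : Proper (@iso M ==> @iso N) (Fo F)) by exact F_preserves_iso.
  apply mon_iso_bij.
  - apply Kmap_hom; try typeclasses eauto.
    + intros X Y. symmetry. exists (Fmu F X Y). apply Fmu_iso.
    + symmetry. exists (Feps F). apply Feps_iso.
  - apply Kmap_injective; try typeclasses eauto. intros X Y. apply F_reflects_iso, HF.
  - apply Kmap_surjective; try typeclasses eauto. apply HF.
Qed.

End SMEquivalence.

Theorem proposition8p1 :
  (* Part 1: the exact sequence K(Pic M) -> K(M) -> K(P M) is isomorphic to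
     U(K M) -> K(M) -> K(M)/U(K M), with identity in the middle. *)
  (forall M : SMC,
     exists (phi : KPic M -> Umon (KM M)) (psi : KP M -> QUmon (KM M)),
       mon_iso phi /\ mon_iso psi /\
       (forall c : KPic M, Uincl (phi c) = K_iota c) /\
       (forall x : KM M, psi (K_pi x) = Uquot x))
  /\
  (* Part 2: homotopy invariance under symmetric monoidal equivalences:
     K(F) together with induced isomorphisms on Pic[-] and Pure[-]
     forms an isomorphism of exact sequences. *)
  (forall (M N : SMC) (F : SMFunctor M N),
     sm_equivalence F ->
     mon_iso (A := KM M) (B := KM N) (K_F F) /\
     exists (phi0 : KPic M -> KPic N) (phi2 : KP M -> KP N),
       mon_iso phi0 /\ mon_iso phi2 /\
       (forall c : KPic M, K_iota (phi0 c) = K_F F (K_iota c)) /\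
       (forall x : KM M, phi2 (K_pi x) = K_pi (K_F F x))).
Proof.
  split.
  - intro M.
    destruct (units_embedding_iso (K_iota_units_embedding M)) as [phi [Hphi Ephi]].
    destruct (unit_quotient_iso (K_pi_unit_quotient M)) as [psi [Hpsi Epsi]].
    exists phi, psi; auto.
  - intros M N F HF. pose proof (K_F_iso HF) as HK. split; [exact HK |].
    destruct (units_embedding_unique
                (units_embedding_comp (K_iota_units_embedding M) HK)
                (K_iota_units_embedding N)) as [phi0 [H0 E0]].
    destruct (unit_quotient_unique (K_pi_unit_quotient M)
                (unit_quotient_map_comp (K_pi_unit_quotient N) HK)) as [phi2 [H2 E2]].
    exists phi0, phi2; auto.
Qed.
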